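(* Let $U$ be a finite-dimensional complex vector space with basis $\mathbb B$, $w:U\to U$ linear, $\xi:\mathbb B\to\mathbb B$ a bijection and $\le$ a preorder on $\mathbb B$ such that $w$ acts on $(U,\mathbb B,\le)$ by $\xi$ up to lower-order terms. Let $\preceq$ be a linearisation of $\le$ (a total order on $\mathbb B$ with $x\prec y$ whenever $x<y$), and let $[w]_{(\mathbb B,\preceq)}$ be the matrix of $w$ in the ordered basis $(\mathbb B,\preceq)$. Then $[w]_{(\mathbb B,\preceq)}$ has a unique QR decomposition $QR$ (with $Q$ orthogonal and $R$ upper triangular with positive diagonal entries), and $Q$ is a generalised permutation matrix for $\xi$.
   Context: $w$ acts on $(U,\mathbb B,\le)$ by $\xi$ up to lower-order terms if for every $x\in\mathbb B$ there are integers $a_y$ with $w(x)=\pm\xi(x)+\sum_{y<x}a_y\xi(y)$, the sign depending only on the equivalence class of $x$ under the equivalence relation induced by $\le$. A generalised permutation matrix for $\xi$ is a matrix whose only nonzero entries are $\pm1$ in the positions $(\xi(x),x)$, $x\in\mathbb B$. *)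

From HB Require Import structures.
From mathcomp Require Import all_boot all_order all_algebra all_fingroup.
From mathcomp Require Import reals.
From mathcomp Require Import complex.

Set Implicit Arguments.
Unset Strict Implicit.
Unset Printing Implicit Defensive.

Import Order.TTheory GRing.Theory Num.Theory.
Local Open Scope ring_scope.

Definition preorder_on (B : finType) (le : rel B) :=
  reflexive le /\ transitive le.

Definition pre_lt (B : finType) (le : rel B) : rel B :=
  fun y x => le y x && ~~ le x y.

Definition pre_equiv (B : finType) (le : rel B) : rel B :=
  fun x y => le x y && le y x.

Definition acts_up_to_lower (K : fieldType) (U : lmodType K) (B : finType)
    (b : B -> U) (w : U -> U) (xi : B -> B) (le : rel B) :=
  exists s : B -> bool,
    (forall x y, pre_equiv le x y -> s x = s y) /\
    forall x, exists a : B -> int,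
      w (b x) = (-1) ^+ s x *: b (xi x)
                + \sum_(y | pre_lt le y x) (a y)%:~R *: b (xi y).

(* A linearisation of le, given as the ordered enumeration
   v : 'I_#|B| -> B of B (v i is the i-th element for the total order);
   v must be a bijection and x < y (strictly, for le) forces x before y. *)
Definition linearisation (B : finType) (le : rel B) (v : 'I_#|B| -> B) :=
  bijective v /\ forall i j, pre_lt le (v i) (v j) -> (i < j)%N.

Definition ordered_basis (K : fieldType) (U : vectType K) (B : finType)
    (b : B -> U) (v : 'I_#|B| -> B) : #|B|.-tuple U :=
  [tuple b (v i) | i < #|B|].

Definition mx_in_basis (K : fieldType) (U : vectType K) (B : finType)
    (b : B -> U) (v : 'I_#|B| -> B) (w : U -> U) : 'M[K]_#|B| :=
  \matrix_(i, j) coord (ordered_basis b v) i (w (b (v j))).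

Definition orthogonal_mx (R : realType) n (Q : 'M[R]_n) := Q^T *m Q = 1%:M.

Definition upper_pos_diag (R : realType) n (Rm : 'M[R]_n) :=
  (forall i j : 'I_n, (j < i)%N -> Rm i j = 0) /\ (forall i, 0 < Rm i i).

Definition is_QR (R : realType) n (M : 'M[R[i]]_n) (Q Rm : 'M[R]_n) :=
  [/\ orthogonal_mx Q, upper_pos_diag Rm & M = map_mx (real_complex R) (Q *m Rm)].

Definition gen_perm_mx_for (R : realType) (B : finType) (xi : B -> B)
    (v : 'I_#|B| -> B) (Q : 'M[R]_#|B|) :=
  forall i j, if v i == xi (v j) then Q i j = 1 \/ Q i j = -1 else Q i j = 0.

(* The matrix M of w
   factors as M = Q R with Q the signed permutation matrix of xi (read through
   the indexing v) and R = Q^T M: the (k, j) entry of R is, up to sign, the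
   coefficient of b (xi (v k)) in w (b (v j)), which vanishes unless v k = v j
   or v k < v j, hence (by the linearisation) unless k <= j; its diagonal
   entries are (±1)^2 = 1.  For uniqueness, Q R1 = Q' R2 makes X = Q^T Q'
   orthogonal with X R2 = R1, and comparing columns from left to right forces
   X = 1. *)

From HB Require Import structures.
From mathcomp Require Import all_boot all_order all_algebra all_fingroup.
From mathcomp Require Import reals complex.

Set Implicit Arguments.
Unset Strict Implicit.
Unset Printing Implicit Defensive.

Import Order.TTheory GRing.Theory Num.Theory.
Local Open Scope ring_scope.

Section OrthogonalTimesUpper.

Variables (R : realType) (n : nat) (X R1 R2 : 'M[R]_n).
Hypotheses (X_orth : orthogonal_mx X) (R1_up : upper_pos_diag R1)
  (R2_up : upper_pos_diag R2) (XR1 : X *m R1 = R2).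

Lemma orthogonal_col_dot k l : \sum_i X i k * X i l = (k == l)%:R.
Proof.
have := congr1 (fun M : 'M[R]_n => M k l) X_orth; rewrite !mxE => <-.
by apply: eq_bigr => i _; rewrite mxE.
Qed.

Lemma orthogonal_mul_upper_col (j : 'I_n) :
  (forall k : 'I_n, (k < j)%N -> forall i, X i k = (i == k)%:R) ->
  forall i, X i j = (i == j)%:R.
Proof.
move=> prev; have [R1_trig R1_pos] := R1_up; have [R2_trig _] := R2_up.
have above (i : 'I_n) : (i < j)%N -> X i j = 0.
  move=> lt_ij; have := orthogonal_col_dot i j.
  have /negbTE -> : i != j by rewrite neq_ltn lt_ij.
  rewrite (bigD1 i) //= prev // eqxx mul1r big1 ?addr0 // => l ne_li.
  by rewrite prev // (negbTE ne_li) mul0r.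
have below_diag (i : 'I_n) : (j <= i)%N -> R2 i j = X i j * R1 j j.
  move=> le_ji; rewrite -XR1 mxE (bigD1 j) //= big1 ?addr0 // => l ne_lj.
  case: (ltnP l j) => [lt_lj | le_jl].
    have /negbTE ne_il : i != l by rewrite neq_ltn (leq_trans lt_lj le_ji) orbT.
    by rewrite prev // ne_il mul0r.
  by rewrite R1_trig ?mulr0 // ltn_neqAle le_jl andbT eq_sym.
have below (i : 'I_n) : (j < i)%N -> X i j = 0.
  move=> lt_ji; have := below_diag i (ltnW lt_ji).
  rewrite R2_trig // => /esym/eqP; rewrite mulf_eq0 (gt_eqF (R1_pos j)) orbF.
  by move/eqP.
have diag_pos : 0 < X j j.
  by have := R2_up.2 j; rewrite below_diag // pmulr_lgt0.
have diag_sq : X j j ^+ 2 = 1.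
  have := orthogonal_col_dot j j; rewrite eqxx (bigD1 j) //= big1 ?addr0 ?expr2 //.
  move=> i ne_ij; case: (ltngtP i j) => [/above|/below|/val_inj eq_ij] //.
  - by move=> ->; rewrite mul0r.
  - by move=> ->; rewrite mul0r.
  - by rewrite eq_ij eqxx in ne_ij.
move=> i; case: (ltngtP i j) => [lt_ij|lt_ji|/val_inj->].
- by rewrite above // (_ : (i == j) = false) //; apply/negbTE; rewrite neq_ltn lt_ij.
- by rewrite below // (_ : (i == j) = false) //; apply/negbTE; rewrite neq_ltn lt_ji orbT.
- by apply/eqP; rewrite eqxx -(sqrp_eq1 (ltW diag_pos)) diag_sq.
Qed.

Lemma orthogonal_mul_upper_eq1 : X = 1%:M.
Proof.
suff cols m (j : 'I_n) : (j < m)%N -> forall i, X i j = (i == j)%:R.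
  by apply/matrixP => i j; rewrite (cols j.+1) // mxE.
elim: m j => // m IH j; rewrite ltnS => le_jm.
by apply: orthogonal_mul_upper_col => k lt_kj; apply: IH (leq_trans lt_kj le_jm).
Qed.

End OrthogonalTimesUpper.

Lemma QR_unique (R : realType) n (Q Q' R1 R2 : 'M[R]_n) :
  orthogonal_mx Q -> orthogonal_mx Q' -> upper_pos_diag R1 -> upper_pos_diag R2 ->
  Q *m R1 = Q' *m R2 -> Q' = Q /\ R2 = R1.
Proof.
move=> Q_orth Q'_orth R1_up R2_up QR_eq.
have QQT : Q *m Q^T = 1%:M by apply: mulmx1C.
have X_orth : orthogonal_mx (Q^T *m Q').
  by rewrite /orthogonal_mx trmx_mul trmxK mulmxA -(mulmxA Q'^T) QQT mulmx1.
have XR2 : Q^T *m Q' *m R2 = R1 by rewrite -mulmxA -QR_eq mulmxA Q_orth mul1mx.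
have X1 := orthogonal_mul_upper_eq1 X_orth R2_up R1_up XR2.
split; last by rewrite -XR2 X1 mul1mx.
by rewrite -(mul1mx Q') -QQT -mulmxA X1 mulmx1.
Qed.

Lemma is_QR_unique (R : realType) n (M : 'M[R[i]]_n) (Q Q' R1 R2 : 'M[R]_n) :
  is_QR M Q R1 -> is_QR M Q' R2 -> Q' = Q /\ R2 = R1.
Proof.
move=> [Q_orth R1_up ->] [Q'_orth R2_up /map_mx_inj QR_eq].
exact: QR_unique.
Qed.

Definition signed_perm_mx {T : pzRingType} n (s : {perm 'I_n}) (e : 'I_n -> bool) : 'M[T]_n :=
  \matrix_(i, j) if i == s j then (-1) ^+ e j else 0.

Lemma tr_signed_perm_mx_mulE (T : pzRingType) n (s : {perm 'I_n}) e (M : 'M[T]_n) k j :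
  ((signed_perm_mx s e)^T *m M) k j = (-1) ^+ e k * M (s k) j.
Proof.
rewrite mxE (bigD1 (s k)) //= !mxE eqxx big1 ?addr0 // => i ne_i_sk.
by rewrite !mxE (negbTE ne_i_sk) mul0r.
Qed.

Lemma signed_perm_mx_orthogonal (T : pzRingType) n (s : {perm 'I_n}) e :
  (signed_perm_mx s e)^T *m signed_perm_mx s e = 1%:M :> 'M[T]_n.
Proof.
apply/matrixP => k l; rewrite tr_signed_perm_mx_mulE !mxE (inj_eq perm_inj).
by case: eqVneq => [->|_]; rewrite ?mulr0 // -expr2 sqrr_sign.
Qed.

Definition lower_coef (B : finType) (le : rel B) (s : B -> bool) (a : B -> B -> int)
    (y x : B) : int :=
  if y == x then (-1) ^+ s x else if pre_lt le y x then a x y else 0.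

Lemma acts_up_to_lower_coef (K : fieldType) (U : lmodType K) (B : finType)
    (b : B -> U) (w : U -> U) (xi : B -> B) (le : rel B) :
  acts_up_to_lower b w xi le ->
  exists s a, forall x, w (b x) = \sum_y (lower_coef le s a y x)%:~R *: b (xi y).
Proof.
move=> [s [_ w_bx]]; have [a {}w_bx] := fin_all_exists w_bx.
exists s, a => x; rewrite w_bx [RHS](bigD1 x) //= /lower_coef eqxx rmorph_sign.
congr (_ + _); rewrite big_mkcond [RHS]big_mkcond; apply: eq_bigr => y _ /=.
by case: eqVneq => [->|_] /=; rewrite /pre_lt ?andbN //; case: ifP; rewrite ?scale0r.
Qed.

Lemma free_ordered_basis (K : fieldType) (U : vectType K) (B : finType)
    (b : B -> U) (v : 'I_#|B| -> B) :
  bijective v -> free [seq b x | x <- enum B] -> free (ordered_basis b v).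
Proof.
case=> iv vK ivK; apply: eq_rect; apply: perm_free.
rewrite /ordered_basis /= (map_comp b v).
apply: perm_map; apply: uniq_perm; rewrite ?(map_inj_uniq (can_inj vK)) ?enum_uniq //.
by move=> x; rewrite mem_enum -(ivK x) map_f ?mem_enum.
Qed.

Lemma coord_ordered_basis (K : fieldType) (U : vectType K) (B : finType)
    (b : B -> U) (v : 'I_#|B| -> B) i y :
  bijective v -> free (ordered_basis b v) ->
  coord (ordered_basis b v) i (b y) = (y == v i)%:R.
Proof.
case=> iv vK ivK b_free; rewrite -{1}(ivK y).
have -> : b (v (iv y)) = (ordered_basis b v)`_(iv y) by rewrite -tnth_nth tnth_mktuple.
by rewrite coord_free // -(inj_eq (can_inj vK)) ivK.
Qed.

Lemma mx_in_basis_coef (K : fieldType) (U : vectType K) (B : finType)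
    (b : B -> U) (v : 'I_#|B| -> B) (w : {linear U -> U}) (xi : {perm B})
    (c : B -> B -> K) :
  bijective v -> free [seq b x | x <- enum B] ->
  (forall x, w (b x) = \sum_y c y x *: b (xi y)) ->
  forall i j, mx_in_basis b v w i j = c ((xi^-1)%g (v i)) (v j).
Proof.
move=> v_bij b_free w_bx i j; rewrite mxE w_bx raddf_sum /=.
rewrite (bigD1 ((xi^-1)%g (v i))) //= big1 ?addr0 => [|y ne_y].
  by rewrite linearZ /= coord_ordered_basis ?free_ordered_basis // permKV eqxx mulr1.
rewrite linearZ /= coord_ordered_basis ?free_ordered_basis //.
by rewrite (canF_eq (permK xi)) (negbTE ne_y) mulr0.
Qed.

Section SignedFactor.

Variables (B : finType) (le : rel B) (xi : {perm B}) (v : 'I_#|B| -> B).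
Variables (iv : B -> 'I_#|B|) (s : B -> bool) (a : B -> B -> int).
Hypotheses (vK : cancel v iv) (ivK : cancel iv v).
Hypothesis v_lin : forall i j, pre_lt le (v i) (v j) -> (i < j)%N.

Lemma xi_idx_inj : injective (fun j => iv (xi (v j))).
Proof. exact: inj_comp (can_inj ivK) (inj_comp (@perm_inj _ xi) (can_inj vK)). Qed.

Definition xi_idx : {perm 'I_#|B|} := perm xi_idx_inj.

Lemma xi_idxE j : v (xi_idx j) = xi (v j).
Proof. by rewrite permE ivK. Qed.

Definition lower_coef_mx {T : pzRingType} : 'M[T]_#|B| :=
  \matrix_(i, j) (lower_coef le s a ((xi^-1)%g (v i)) (v j))%:~R.

Lemma upper_pos_diag_signed_factor (R : realType) :
  upper_pos_diag ((signed_perm_mx xi_idx (s \o v))^T *m lower_coef_mx : 'M[R]_#|B|).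
Proof.
split=> [k j lt_jk | k]; rewrite tr_signed_perm_mx_mulE mxE xi_idxE permK /lower_coef /=.
  rewrite (inj_eq (can_inj vK)).
  have /negbTE -> : k != j by rewrite neq_ltn lt_jk orbT.
  case: ifP => [lt_vkj | _]; last by rewrite mulr0.
  by have := ltn_trans (v_lin lt_vkj) lt_jk; rewrite ltnn.
by rewrite eqxx rmorph_sign -expr2 sqrr_sign ltr01.
Qed.

Lemma gen_perm_signed_factor (R : realType) :
  gen_perm_mx_for xi v (signed_perm_mx xi_idx (s \o v) : 'M[R]_#|B|).
Proof.
move=> i j; rewrite mxE /= -xi_idxE (inj_eq (can_inj vK)).
by case: (i == xi_idx j) (s (v j)) => [[]|]; [right; rewrite expr1 | left; rewrite expr0 |].
Qed.

End SignedFactor.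

Theorem lemmaA2 (R : realType) (U : vectType R[i]) (B : finType)
    (b : B -> U) (w : {linear U -> U}) (xi : {perm B}) (le : rel B)
    (v : 'I_#|B| -> B) :
  basis_of fullv [seq b x | x <- enum B] ->
  preorder_on le ->
  acts_up_to_lower b w xi le ->
  linearisation le v ->
  exists (Q Rm : 'M[R]_#|B|),
    [/\ is_QR (mx_in_basis b v w) Q Rm,
        (forall Q' Rm', is_QR (mx_in_basis b v w) Q' Rm' -> Q' = Q /\ Rm' = Rm)
      & gen_perm_mx_for xi v Q].
Proof.
rewrite basisEfree => /and3P[b_free _ _] _ /acts_up_to_lower_coef[s [a w_bx]].
case=> v_bij v_lin; have [iv vK ivK] := v_bij.
pose Q : 'M[R]_#|B| := signed_perm_mx (xi_idx xi vK ivK) (s \o v).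
pose M : 'M[R]_#|B| := lower_coef_mx le xi v s a.
have Q_orth : orthogonal_mx Q by exact: signed_perm_mx_orthogonal.
have QR : is_QR (mx_in_basis b v w) Q (Q^T *m M).
  split=> //; first exact: upper_pos_diag_signed_factor.
  rewrite mulmxA (mulmx1C Q_orth) mul1mx; apply/matrixP => i j.
  by rewrite (mx_in_basis_coef v_bij b_free w_bx) !mxE rmorph_int.
exists Q, (Q^T *m M); split=> // [Q' Rm' QR'|]; first exact: is_QR_unique QR'.
exact: gen_perm_signed_factor.
Qed.
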